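(* Let $\lambda>0$ and $\mu_R,\mu_L,\mu_U>0$. The Markov jump process on $\mathbb{N}^3$, with coordinates $x=(x_R,x_L,x_U)$ and transitions $x\to x+e_R+e_U-e_L$ at rate $\mu_Lx_L$, $x\to x-e_R$ at rate $\mu_Rx_R$, $x\to x-e_U$ at rate $\mu_Ux_U$, and $x\to x+e_L$ at rate $\lambda$, has as invariant distribution the law of $(X+Y_1,Z,X+Y_2)$, where $X,Y_1,Y_2,Z$ are independent Poisson random variables with respective parameters $$\frac{\lambda}{\mu_R+\mu_U},\quad \frac{\lambda\mu_U}{\mu_R(\mu_R+\mu_U)},\quad\frac{\lambda\mu_R}{\mu_U(\mu_R+\mu_U)},\quad\frac{\lambda}{\mu_L}.$$
   Context: $e_R,e_L,e_U$ denote the unit vectors of $\mathbb{N}^3$ for the three coordinates. *)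

From HB Require Import structures.
From mathcomp Require Import all_boot all_order all_algebra.
From mathcomp Require Import reals.
From mathcomp Require Import sequences.
Set Implicit Arguments. Unset Strict Implicit. Unset Printing Implicit Defensive.
Import Order.TTheory GRing.Theory Num.Theory.
Local Open Scope ring_scope.

Definition state := (nat * nat * nat)%type.
Definition xR (x : state) : nat := x.1.1.
Definition xL (x : state) : nat := x.1.2.
Definition xU (x : state) : nat := x.2.

(* Transition rate q(x,y) of the Markov jump process, for y <> x:
   x -> x + e_R + e_U - e_L  at rate mu_L x_L,
   x -> x - e_R              at rate mu_R x_R,
   x -> x - e_U              at rate mu_U x_U,
   x -> x + e_L              at rate lambda.
   (Truncated subtraction only matters when the corresponding rate is 0.) *)
Definition rate (R : realType) (lam muR muL muU : R) (x y : state) : R :=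
  (y == (xR x + 1, xL x - 1, xU x + 1)%N)%:R * (muL * (xL x)%:R)
+ (y == (xR x - 1, xL x, xU x)%N)%:R * (muR * (xR x)%:R)
+ (y == (xR x, xL x, xU x - 1)%N)%:R * (muU * (xU x)%:R)
+ (y == (xR x, xL x + 1, xU x)%N)%:R * lam.

(* Finite sum over the box of states z with z_i <= y_i + 1, z <> y.
   Every state that can jump to y, and every state y can jump to,
   lies in this box, so these are the full (finite) sums over N^3. *)
Definition box_sum (R : realType) (y : state) (F : state -> R) : R :=
  \sum_(i < (xR y).+2) \sum_(j < (xL y).+2) \sum_(k < (xU y).+2)
     (((i : nat), (j : nat), (k : nat)) != y)%:R * F (i : nat, j : nat, k : nat).

Definition is_invariant_distribution (R : realType) (lam muR muL muU : R) (pi : state -> R) :=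
  (forall x, 0 <= pi x) /\
  (forall y, box_sum y (fun x => pi x * rate lam muR muL muU x y)
             = pi y * box_sum y (fun z => rate lam muR muL muU y z)).

Definition poisson_pmf (R : realType) (m : R) (k : nat) : R :=
  expR (- m) * m ^+ k / (k`!)%:R.

(* Law of (X + Y1, Z, X + Y2) with X, Y1, Y2, Z independent Poisson with
   parameters a, b1, b2, c: its probability mass function. *)
Definition law_XYZ (R : realType) (a b1 b2 c : R) (y : state) : R :=
  poisson_pmf c (xL y) *
  \sum_(k < (minn (xR y) (xU y)).+1)
     poisson_pmf a k * poisson_pmf b1 (xR y - k)%N * poisson_pmf b2 (xU y - k)%N.

From mathcomp Require Import all_boot all_order all_algebra.
From mathcomp Require Import reals sequences exp zify ring.
Set Implicit Arguments. Unset Strict Implicit. Unset Printing Implicit Defensive.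
Import Order.TTheory GRing.Theory Num.Theory.
Local Open Scope ring_scope.

(* The candidate law factors as pi(r, l, u) = P(l) g(r, u), with P the Poisson(lam / muL)
   pmf and g the bivariate Poisson pmf of (X + Y1, X + Y2).  The L-coordinate behaves like
   an M/M/oo queue: P satisfies detailed balance muL (l + 1) P(l + 1) = lam P(l), which turns
   the inflow from (r - 1, l + 1, u - 1) into lam P(l) g(r - 1, u - 1) and cancels the outflow
   muL l.  What remains is global balance for g under arrivals of e_R + e_U at rate lam and
   departures at rates muR r and muU u; it follows from the recurrences
   (r + 1) g(r + 1, u) = a g(r, u - 1) + b1 g(r, u) and its mirror image, which come from
   k p_m(k) = m p_m(k - 1) applied to the convolution defining g. *)

Lemma poisson_pmf_ge0 (R : realType) (m : R) k : 0 <= m -> 0 <= poisson_pmf m k.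
Proof.
move=> m_ge0; rewrite /poisson_pmf; apply: mulr_ge0; last by rewrite invr_ge0 ler0n.
by rewrite mulr_ge0 ?expR_ge0 ?exprn_ge0.
Qed.

Lemma poisson_pmfS (R : realType) (m : R) k :
  (k.+1)%:R * poisson_pmf m k.+1 = m * poisson_pmf m k.
Proof.
rewrite /poisson_pmf factS natrM exprS.
have fact_neq0 : (k`!)%:R != 0 :> R by rewrite pnatr_eq0 -lt0n fact_gt0.
by field; rewrite fact_neq0 nat1r pnatr_eq0.
Qed.

Lemma poisson_detailed_balance (R : realType) (lam mu : R) n : mu != 0 ->
  mu * (n.+1)%:R * poisson_pmf (lam / mu) n.+1 = lam * poisson_pmf (lam / mu) n.
Proof. by move=> mu_neq0; rewrite -mulrA poisson_pmfS mulrA [mu * _]mulrC divfK. Qed.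

(* The summand of [bipoisson_pmf], extended by zero to every k so that the convolution can
   be summed over any range k < N with N > minn r u. *)
Definition bipoisson_term (R : realType) (a b1 b2 : R) (r u k : nat) : R :=
  ((k <= r) && (k <= u))%N%:R *
    (poisson_pmf a k * poisson_pmf b1 (r - k)%N * poisson_pmf b2 (u - k)%N).

Definition bipoisson_pmf (R : realType) (a b1 b2 : R) (r u : nat) : R :=
  \sum_(k < (minn r u).+1)
     poisson_pmf a k * poisson_pmf b1 (r - k)%N * poisson_pmf b2 (u - k)%N.

Section Bipoisson.
Variables (R : realType) (a b1 b2 : R).
Local Notation term := (bipoisson_term a b1 b2).
Local Notation g := (bipoisson_pmf a b1 b2).

Lemma bipoisson_pmf_widen N r u : (minn r u < N)%N -> g r u = \sum_(k < N) term r u k.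
Proof.
move=> ltN; rewrite /bipoisson_pmf (big_ord_widen N (fun k =>
  poisson_pmf a k * poisson_pmf b1 (r - k)%N * poisson_pmf b2 (u - k)%N) ltN) big_mkcond.
by apply: eq_bigr => k _; rewrite /bipoisson_term ltnS leq_min; case: ifP; rewrite ?mul1r ?mul0r.
Qed.

Lemma bipoisson_termSr r u k :
  (r.+1 - k)%:R * term r.+1 u k = b1 * term r u k.
Proof.
rewrite /bipoisson_term; case: (leqP k r) => [le_kr | lt_rk].
  rewrite subSn // (leq_trans le_kr) //=.
  transitivity ((k <= u)%N%:R * poisson_pmf a k * poisson_pmf b2 (u - k)%N *
                ((r - k).+1%:R * poisson_pmf b1 (r - k).+1)); first by ring.
  by rewrite poisson_pmfS; ring.
by rewrite (eqP lt_rk) !mul0r mulr0.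
Qed.

Lemma bipoisson_termSS r u k :
  (k.+1)%:R * term r.+1 u k.+1 = (0 < u)%N%:R * a * term r u.-1 k.
Proof.
rewrite /bipoisson_term subSS; case: u => [|u] /=; first by rewrite andbF !mul0r mulr0.
rewrite !ltnS subSS mul1r.
transitivity (((k <= r) && (k <= u))%N%:R * poisson_pmf b1 (r - k)%N *
              poisson_pmf b2 (u - k)%N * (k.+1%:R * poisson_pmf a k.+1)); first by ring.
by rewrite poisson_pmfS; ring.
Qed.

Lemma bipoisson_pmfSl r u :
  (r.+1)%:R * g r.+1 u = (0 < u)%N%:R * a * g r u.-1 + b1 * g r u.
Proof.
rewrite (@bipoisson_pmf_widen (r + u).+2 r.+1 u) ?(@bipoisson_pmf_widen (r + u).+1 r u.-1)
  ?(@bipoisson_pmf_widen (r + u).+2 r u); try lia.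
have split_r k : (r.+1)%:R * term r.+1 u k = k%:R * term r.+1 u k + (r.+1 - k)%:R * term r.+1 u k.
  have [le_kr|lt_rk] := leqP k r.+1; first by rewrite -mulrDl -natrD subnKC.
  by rewrite /bipoisson_term leqNgt lt_rk !mul0r !mulr0 addr0.
rewrite mulr_sumr; under eq_bigr => k _ do rewrite split_r.
rewrite big_split /=; congr (_ + _).
  rewrite big_ord_recl mul0r add0r mulr_sumr.
  by apply: eq_bigr => k _; rewrite lift0 bipoisson_termSS.
by rewrite mulr_sumr; apply: eq_bigr => k _; rewrite bipoisson_termSr.
Qed.

End Bipoisson.

Lemma bipoisson_pmfC (R : realType) (a b1 b2 : R) r u :
  bipoisson_pmf a b1 b2 r u = bipoisson_pmf a b2 b1 u r.
Proof. by rewrite /bipoisson_pmf minnC; apply: eq_bigr => k _; rewrite mulrAC. Qed.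

Lemma bipoisson_pmfSr (R : realType) (a b1 b2 : R) r u :
  (u.+1)%:R * bipoisson_pmf a b1 b2 r u.+1 =
  (0 < r)%N%:R * a * bipoisson_pmf a b1 b2 r.-1 u + b2 * bipoisson_pmf a b1 b2 r u.
Proof. by rewrite !(bipoisson_pmfC a b1 b2) bipoisson_pmfSl. Qed.

Section BipoissonBalance.
Variables (R : realType) (a b1 b2 : R).
Local Notation g := (bipoisson_pmf a b1 b2).

Lemma bipoisson_pmf_natl r u :
  r%:R * g r u = (0 < r)%N%:R * ((0 < u)%N%:R * a * g r.-1 u.-1 + b1 * g r.-1 u).
Proof. by case: r => [|r]; rewrite ?mul0r // bipoisson_pmfSl mul1r. Qed.

Lemma bipoisson_pmf_natr r u :
  u%:R * g r u = (0 < u)%N%:R * ((0 < r)%N%:R * a * g r.-1 u.-1 + b2 * g r u.-1).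
Proof. by case: u => [|u]; rewrite ?mul0r // bipoisson_pmfSr mul1r. Qed.

(* Global balance of the process on N^2 with arrivals of e_R + e_U at rate lam
   and departures from the two coordinates at rates muR x_R and muU x_U. *)
Lemma bipoisson_balance (lam muR muU : R) r u :
    (muR + muU) * a = lam -> muR * b1 = muU * a -> muU * b2 = muR * a ->
  lam * ((0 < r) && (0 < u))%N%:R * g r.-1 u.-1
    + muR * ((r.+1)%:R * g r.+1 u) + muU * ((u.+1)%:R * g r u.+1)
  = muR * (r%:R * g r u) + muU * (u%:R * g r u) + lam * g r u.
Proof.
move=> def_lam def_b1 def_b2.
rewrite bipoisson_pmfSl bipoisson_pmfSr bipoisson_pmf_natl bipoisson_pmf_natr -mulnb natrM.
apply: subr0_eq; transitivity (
    g r u * ((muR * b1 - muU * a) + (muU * b2 - muR * a) + ((muR + muU) * a - lam))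
  + (0 < u)%N%:R * g r u.-1 * (muR * a - muU * b2)
  + (0 < r)%N%:R * g r.-1 u * (muU * a - muR * b1)
  + (0 < r)%N%:R * (0 < u)%N%:R * g r.-1 u.-1 * (lam - (muR + muU) * a)); first by ring.
by rewrite def_lam def_b1 def_b2 !subrr; ring.
Qed.

End BipoissonBalance.

Section BoxSum.
Variable R : realType.

Lemma sum_ord_indicator n (i0 : nat) (x : R) :
  \sum_(i < n) (i == i0 :> nat)%:R * x = (i0 < n)%N%:R * x.
Proof.
elim: n => [|n IHn]; first by rewrite big_ord0 mul0r.
rewrite big_ord_recr /= IHn -mulrDl -natrD ltnS.
by case: ltngtP.
Qed.

Lemma eq_box_sum y (F G : state -> R) : (forall z, F z = G z) -> box_sum y F = box_sum y G.
Proof.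
by move=> eqFG; apply: eq_bigr => i _; apply: eq_bigr => j _; apply: eq_bigr => k _; rewrite eqFG.
Qed.

Lemma box_sumD y (F G : state -> R) :
  box_sum y (fun z => F z + G z) = box_sum y F + box_sum y G.
Proof.
rewrite /box_sum -big_split; apply: eq_bigr => i _; rewrite -big_split.
by apply: eq_bigr => j _; rewrite -big_split; apply: eq_bigr => k _; rewrite mulrDr.
Qed.

Lemma box_sum_indicator r l u (s : state) (x : R) :
    (s.1.1 <= r.+1)%N -> (s.1.2 <= l.+1)%N -> (s.2 <= u.+1)%N ->
  box_sum (r, l, u) (fun z => (z == s)%:R * x) = (s != (r, l, u))%:R * x.
Proof.
case: s => [[i0 j0] k0] /= hi hj hk.
have -> : ((i0, j0, k0) != (r, l, u))%:R * x = (i0 < r.+2)%N%:R * ((j0 < l.+2)%N%:R *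
    ((k0 < u.+2)%N%:R * (((i0, j0, k0) != (r, l, u))%:R * x))) by rewrite !ltnS hi hj hk !mul1r.
rewrite -!sum_ord_indicator; apply: eq_bigr => -[i ?] _; rewrite mulr_sumr.
apply: eq_bigr => -[j ?] _; rewrite !mulr_sumr; apply: eq_bigr => -[k ?] _ /=.
rewrite !xpair_eqE; case: (i =P i0) => [->|_]; case: (j =P j0) => [->|_];
  case: (k =P k0) => [->|_]; by rewrite /= ?mul0r ?mulr0 ?mul1r.
Qed.

End BoxSum.

Lemma mulr_gt0_indicator (R : realType) (x : R) n : (0 < n)%N%:R * (x * n%:R) = x * n%:R.
Proof. by case: n => [|n]; rewrite ?mulr0 ?mul1r. Qed.

(* Rewrites "the jump from x lands on y" as "x is the source s of that jump"; the rate
   factor n vanishes exactly where the two indicators disagree. *)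
Lemma indicator_jump (R : realType) (e s c : bool) (n n' : nat) (x : R) :
    e && (0 < n)%N = s && c -> (s -> n = n') ->
  e%:R * (x * n%:R) = s%:R * (c%:R * (x * n'%:R)).
Proof.
move=> def_e def_n; rewrite -mulr_gt0_indicator mulrA -natrM mulnb def_e -mulnb natrM -mulrA.
by case: s {def_e} def_n => [/(_ isT) ->|_]; rewrite ?mul0r.
Qed.

Section Rates.
Variables (R : realType) (lam muR muL muU : R).
Local Notation rate := (rate lam muR muL muU).

Lemma box_sum_rate_out r l u :
  box_sum (r, l, u) (rate (r, l, u)) = muL * l%:R + muR * r%:R + muU * u%:R + lam.
Proof.
rewrite /rate /xR /xL /xU /= !box_sumD !box_sum_indicator /=; try lia.
have neqR : (((r - 1)%N, l, u) != (r, l, u)) = (0 < r)%N by rewrite !xpair_eqE; lia.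
have neqU : ((r, l, (u - 1)%N) != (r, l, u)) = (0 < u)%N by rewrite !xpair_eqE; lia.
have neqL : (((r + 1)%N, (l - 1)%N, (u + 1)%N) != (r, l, u)) by rewrite !xpair_eqE; lia.
have neqL' : ((r, (l + 1)%N, u) != (r, l, u)) by rewrite !xpair_eqE; lia.
by rewrite neqR neqU neqL neqL' !mulr_gt0_indicator !mul1r.
Qed.

Lemma rate_into (pi : state -> R) r l u x :
  pi x * rate x (r, l, u) =
    (x == (r.-1, l.+1, u.-1))%:R *
      (((0 < r) && (0 < u))%N%:R * (muL * (l.+1)%:R) * pi (r.-1, l.+1, u.-1))
  + (x == (r.+1, l, u))%:R * (muR * (r.+1)%:R * pi (r.+1, l, u))
  + (x == (r, l, u.+1))%:R * (muU * (u.+1)%:R * pi (r, l, u.+1))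
  + (x == (r, l.-1, u))%:R * ((0 < l)%N%:R * lam * pi (r, l.-1, u)).
Proof.
have eval s w : pi x * ((x == s)%:R * w) = (x == s)%:R * (w * pi s).
  by case: eqVneq => [->|_]; rewrite ?mul1r ?mul0r ?mulr0 // mulrC.
case: x eval => [[i j] k] eval; rewrite /rate /xR /xL /xU /=.
have -> : ((r, l, u) == (i + 1, j - 1, k + 1)%N)%:R * (muL * j%:R)
    = ((i, j, k) == (r.-1, l.+1, u.-1))%:R * (((0 < r) && (0 < u))%N%:R * (muL * (l.+1)%:R)).
  by apply: indicator_jump => [|/eqP[_ ->]] //; rewrite !xpair_eqE; lia.
have -> : ((r, l, u) == (i - 1, j, k)%N)%:R * (muR * i%:R)
    = ((i, j, k) == (r.+1, l, u))%:R * (1 * (muR * (r.+1)%:R)).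
  by apply: (indicator_jump (c := true)) => [|/eqP[->]] //; rewrite !xpair_eqE; lia.
have -> : ((r, l, u) == (i, j, k - 1)%N)%:R * (muU * k%:R)
    = ((i, j, k) == (r, l, u.+1))%:R * (1 * (muU * (u.+1)%:R)).
  by apply: (indicator_jump (c := true)) => [|/eqP[_ _ ->]] //; rewrite !xpair_eqE; lia.
have -> : ((r, l, u) == (i, j + 1, k)%N)%:R * lam
    = ((i, j, k) == (r, l.-1, u))%:R * ((0 < l)%N%:R * lam).
  rewrite mulrA -natrM mulnb; congr (_%:R * _); congr nat_of_bool.
  by rewrite !xpair_eqE; lia.
by rewrite !mulrDr !eval !mul1r.
Qed.

Lemma box_sum_rate_in (pi : state -> R) r l u :
  box_sum (r, l, u) (fun x => pi x * rate x (r, l, u)) =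
    ((0 < r) && (0 < u))%N%:R * (muL * (l.+1)%:R) * pi (r.-1, l.+1, u.-1)
  + muR * (r.+1)%:R * pi (r.+1, l, u) + muU * (u.+1)%:R * pi (r, l, u.+1)
  + (0 < l)%N%:R * lam * pi (r, l.-1, u).
Proof.
rewrite (eq_box_sum _ (rate_into pi r l u)) !box_sumD !box_sum_indicator /=; try lia.
have neqL : (r.-1, l.+1, u.-1) != (r, l, u) by rewrite !xpair_eqE; lia.
have neqR : (r.+1, l, u) != (r, l, u) by rewrite !xpair_eqE; lia.
have neqU : (r, l, u.+1) != (r, l, u) by rewrite !xpair_eqE; lia.
have neqL' : ((r, l.-1, u) != (r, l, u)) = (0 < l)%N by rewrite !xpair_eqE; lia.
by rewrite neqL neqR neqU neqL' !mul1r !mulrA -natrM mulnb andbb.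
Qed.

End Rates.

Lemma law_XYZE (R : realType) (a b1 b2 c : R) r l u :
  law_XYZ a b1 b2 c (r, l, u) = poisson_pmf c l * bipoisson_pmf a b1 b2 r u.
Proof. by []. Qed.

Lemma law_XYZ_ge0 (R : realType) (a b1 b2 c : R) y :
  0 <= a -> 0 <= b1 -> 0 <= b2 -> 0 <= c -> 0 <= law_XYZ a b1 b2 c y.
Proof.
move=> a_ge0 b1_ge0 b2_ge0 c_ge0; rewrite mulr_ge0 ?poisson_pmf_ge0 ?sumr_ge0 // => k _.
by apply: mulr_ge0; [apply: mulr_ge0|]; apply: poisson_pmf_ge0.
Qed.

Theorem mainTheorem4 (R : realType) (lam muR muL muU : R)
  (hlam : 0 < lam) (hR : 0 < muR) (hL : 0 < muL) (hU : 0 < muU) :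
  is_invariant_distribution lam muR muL muU
    (law_XYZ (lam / (muR + muU))
             (lam * muU / (muR * (muR + muU)))
             (lam * muR / (muU * (muR + muU)))
             (lam / muL)).
Proof.
have muRU_gt0 : 0 < muR + muU by rewrite addr_gt0.
split=> [y|[[r l] u]].
  by rewrite law_XYZ_ge0 // ?divr_ge0 ?mulr_ge0 // ltW.
rewrite box_sum_rate_in box_sum_rate_out !law_XYZE.
set P := poisson_pmf (lam / muL); set g := bipoisson_pmf _ _ _.
have P_balance n : muL * (n.+1)%:R * P n.+1 = lam * P n.
  by rewrite poisson_detailed_balance ?gt_eqF.
have P_balance' : (0 < l)%N%:R * lam * P l.-1 = muL * l%:R * P l.
  by case: l => [|l]; rewrite ?(mul0r, mulr0) // mul1r P_balance.
have g_balance : lam * ((0 < r) && (0 < u))%N%:R * g r.-1 u.-1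
    + muR * ((r.+1)%:R * g r.+1 u) + muU * ((u.+1)%:R * g r u.+1)
    = muR * (r%:R * g r u) + muU * (u%:R * g r u) + lam * g r u.
  by apply: bipoisson_balance; field; rewrite ?gt_eqF.
transitivity (((0 < r) && (0 < u))%N%:R * g r.-1 u.-1 * (muL * (l.+1)%:R * P l.+1)
    + P l * (muR * ((r.+1)%:R * g r.+1 u) + muU * ((u.+1)%:R * g r u.+1))
    + g r u * ((0 < l)%N%:R * lam * P l.-1)); first by ring.
rewrite P_balance P_balance'.
transitivity (P l * (lam * ((0 < r) && (0 < u))%N%:R * g r.-1 u.-1
    + muR * ((r.+1)%:R * g r.+1 u) + muU * ((u.+1)%:R * g r u.+1))
    + muL * l%:R * P l * g r u); first by ring.
by rewrite g_balance; ring.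
Qed.
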